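(* Let $p\ge1$, let $W$ be a bounded graphon over a probability space $(\Omega,\mathcal F,\pi)$, and let $W'$ be a graphon over $(\Omega,\mathcal F,\pi)$ which is a block model with $N$ classes (i.e., $W'=\sum_{i,j=1}^N\beta_{ij}1_{Y_i\times Y_j}$ for a measurable partition $Y_1,\dots,Y_N$ of $\Omega$) and satisfies $\|W-W'\|_p\le\varepsilon$. Then $\varepsilon^{(p)}_{\ge\kappa}(W)\le2\varepsilon$ whenever $\kappa\le\frac1{2N}\big(\frac{\varepsilon}{\|W'\|_\infty}\big)^p$.
   Context: A graphon over $(\Omega,\mathcal F,\pi)$ is a measurable symmetric $W:\Omega\times\Omega\to[0,\infty)$ with $\|W\|_1<\infty$, $\|W\|_p^p=\int|W|^p\,d\pi\,d\pi$. A block model $(\mathbf p,B)$ is the graphon on $[k]$ with measure $\mathbf p$ and $W(i,j)=B_{ij}$. $\delta_p(W,W')=\inf_\nu(\int|W(x,y)-W'(x',y')|^pd\nu(x,x')d\nu(y,y'))^{1/p}$ over couplings $\nu$ of the underlying measures. $\varepsilon^{(p)}_{\ge\kappa}(W)=\inf\{\delta_p(W,W'):W'=(\mathbf p,B)\text{ block model},\min_ip_i\ge\kappa\}$. *)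

From HB Require Import structures.
From mathcomp Require Import all_boot all_order all_algebra.
From mathcomp Require Import all_classical all_reals all_analysis ess_sup_inf.
Set Implicit Arguments. Unset Strict Implicit. Unset Printing Implicit Defensive.
Import Order.TTheory GRing.Theory Num.Theory.
Local Open Scope classical_set_scope.
Local Open Scope ring_scope.

(* Index set [k] of a block model with k.+1 classes (a block model on a
   probability measure has at least one class), with the discrete sigma-algebra. *)
Definition bidx (k : nat) : Type := 'I_k.+1.
HB.instance Definition _ k := Finite.on (bidx k).
HB.instance Definition _ k := isPointed.Build (bidx k) ord0.
HB.instance Definition _ k := @isMeasurable.Build default_measure_display
  (bidx k) discrete_measurable discrete_measurable0
  discrete_measurableC discrete_measurableU.

Section Graphons.
Context {R : realType} {d : measure_display} {T : measurableType d}.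
Local Open Scope ereal_scope.

Definition is_graphon (pi : probability T R) (W : T -> T -> R) : Prop :=
  [/\ measurable_fun setT (fun z : T * T => W z.1 z.2),
      (forall x y, W x y = W y x),
      (forall x y, (0 <= W x y)%R) &
      \int[pi \x pi]_z (W z.1 z.2)%:E < +oo].

Definition Lp_norm (pi : probability T R) (p : R) (W : T -> T -> R) : \bar R :=
  (\int[pi \x pi]_z (`|W z.1 z.2| `^ p)%:E) `^ p^-1.

Definition Linf_norm (pi : probability T R) (W : T -> T -> R) : \bar R :=
  ess_sup (pi \x pi) (fun z => (`|W z.1 z.2|)%:E).

Definition is_coupling (pi : probability T R) (k : nat) (pw : bidx k -> R)
    (nu : probability (T * bidx k)%type R) : Prop :=
  (forall A, measurable A -> nu (A `*` setT) = pi A) /\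
  (forall i : bidx k, nu (setT `*` [set i]) = (pw i)%:E).

Definition delta_p_block (pi : probability T R) (p : R) (W : T -> T -> R)
    (k : nat) (pw : bidx k -> R) (B : bidx k -> bidx k -> R) : \bar R :=
  ereal_inf [set (\int[nu \x nu]_z
                    (`|W z.1.1 z.2.1 - B z.1.2 z.2.2| `^ p)%:E) `^ p^-1
            | nu in [set nu | is_coupling pi pw nu]].

Definition is_block_model (k : nat) (pw : bidx k -> R)
    (B : bidx k -> bidx k -> R) : Prop :=
  (forall i, (0 <= pw i)%R) /\ (forall i j, B i j = B j i) /\
  (forall i j, (0 <= B i j)%R).

Definition eps_ge (pi : probability T R) (p kappa : R) (W : T -> T -> R)
    : \bar R :=
  ereal_inf [set e | exists (k : nat) (pw : bidx k -> R)
                            (B : bidx k -> bidx k -> R),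
      [/\ is_block_model pw B, (forall i, (kappa <= pw i)%R) &
          e = delta_p_block pi p W pw B]].

End Graphons.

From HB Require Import structures.
From mathcomp Require Import all_boot all_order all_algebra.
From mathcomp Require Import all_classical all_reals all_analysis ess_sup_inf.
From mathcomp Require Import measurable_realfun.
From mathcomp.algebra_tactics Require Import ring lra.
Set Implicit Arguments. Unset Strict Implicit. Unset Printing Implicit Defensive.
Import Order.TTheory GRing.Theory Num.Theory.
Local Open Scope classical_set_scope.
Local Open Scope ring_scope.

(* Keep the classes [Y i] of [W'] with [0 < pi (Y i)] and [kappa <= pi (Y i)]
   and merge every other class into one of them (if there is none, take the
   one-class model 0).  The resulting block model [W''] has all class masses
   [>= kappa] and agrees with [W'] outside [S x T \/ T x S], where [S] is the
   union of the small classes, so [pi S <= N kappa].  Since [0 <= W', W'' <=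
   ||W'||_oo] there, [||W' - W''||_p^p <= 2 N kappa ||W'||_oo^p <= eps^p].
   Coupling [pi] with the class masses of [W''] along [x |-> (x, class of x)]
   gives [delta_p(W, W'') <= ||W - W''||_p <= ||W - W'||_p + ||W' - W''||_p]. *)

Section BlockIndexMeasurability.
Context {d : measure_display} {U : measurableType d} {k : nat}.

Lemma measurable_fun_bidx (c : U -> bidx k) :
  (forall i, measurable (c @^-1` [set i])) -> measurable_fun setT c.
Proof.
move=> mc _ A _; rewrite setTI.
have -> : c @^-1` A = \bigcup_(i in A) c @^-1` [set i].
  by apply/seteqP; split => [x Ax|x [i Ai /= ->]]//; exists (c x).
by apply: fin_bigcup_measurable => //; exact: finite_finset.
Qed.

Lemma measurable_fun_block {R : realType} (c1 c2 : U -> bidx k)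
    (h : bidx k -> bidx k -> R) :
  measurable_fun setT c1 -> measurable_fun setT c2 ->
  measurable_fun setT (fun u => h (c1 u) (c2 u)).
Proof.
move=> mc1 mc2 _ A _; rewrite setTI.
have -> : (fun u => h (c1 u) (c2 u)) @^-1` A =
    \bigcup_(a in [set: bidx k]) \bigcup_(b in [set b | A (h a b)])
      (c1 @^-1` [set a] `&` c2 @^-1` [set b]).
  apply/seteqP; split => [x Ax|x [a _ [b /= Ab [/= -> ->]]]]//.
  by exists (c1 x) => //; exists (c2 x).
apply: fin_bigcup_measurable; first exact: finite_finset.
move=> a _; apply: fin_bigcup_measurable; first exact: finite_finset.
move=> b _; apply: measurableI.
  by rewrite -[X in measurable X]setTI; exact: mc1.
by rewrite -[X in measurable X]setTI; exact: mc2.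
Qed.

End BlockIndexMeasurability.

Lemma integral_powR_le_support {R : realType} {d : measure_display}
    {V : measurableType d} (mu : measure V R) (f : V -> R) (E : set V)
    (M p : R) :
  0 < p -> 0 <= M -> measurable_fun setT f -> measurable E ->
  (\forall z \ae mu, `|f z| <= M) -> (forall z, ~ E z -> f z = 0) ->
  (\int[mu]_z (`|f z| `^ p)%:E <= (M `^ p)%:E * mu E)%E.
Proof.
move=> p0 M0 mf mE fM f0.
apply: (@le_trans _ _ (\int[mu]_z ((M `^ p)%:E * (\1_E z)%:E))%E).
  apply: ae_ge0_le_integral.
  - exact: measurableT.
  - by move=> z _; rewrite lee_fin powR_ge0.
  - apply/measurable_EFinP; apply: measurableT_comp (measurable_powR p) _.
    exact: measurableT_comp.
  - by move=> z _; rewrite mule_ge0 // lee_fin ?powR_ge0 // indicE ler0n.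
  - by apply: measurable_funeM; apply/measurable_EFinP; exact: measurable_indic.
  apply: filterS fM => z fzM _; rewrite indicE.
  have [zE|zE] := boolP (z \in E).
    rewrite mule1 lee_fin.
    by apply: ge0_ler_powR; rewrite ?nnegrE ?(ltW p0).
  by rewrite mule0 f0 -?notin_setE // normr0 powR0 ?gt_eqF.
rewrite ge0_integralZl //; last 2 first.
- by apply/measurable_EFinP; exact: measurable_indic.
- by rewrite lee_fin powR_ge0.
by rewrite integral_indic // setIT.
Qed.

Section GraphonNorms.
Context {R : realType} {d : measure_display} {T : measurableType d}.
Variable pi : probability T R.
Local Open Scope ereal_scope.

Lemma Lp_normE p (F : T -> T -> R) :
  Lp_norm pi p F = Lnorm (pi \x pi) p%:E (EFin \o (fun z => F z.1 z.2)).
Proof.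
by rewrite unlock /Lp_norm /=; congr (_ `^ _); apply: eq_integral.
Qed.

Lemma Lp_norm_triangle p (F G : T -> T -> R) : (1 <= p)%R ->
  measurable_fun setT (fun z : T * T => F z.1 z.2) ->
  measurable_fun setT (fun z : T * T => G z.1 z.2) ->
  Lp_norm pi p (fun x y => F x y + G x y)%R <= Lp_norm pi p F + Lp_norm pi p G.
Proof. by move=> p1 mF mG; rewrite !Lp_normE; exact: minkowski_EFin. Qed.

Lemma Lp_norm_le p (F : T -> T -> R) e : (0 < p)%R -> (0 <= e)%R ->
  \int[pi \x pi]_z (`|F z.1 z.2| `^ p)%:E <= (e `^ p)%:E ->
  Lp_norm pi p F <= e%:E.
Proof.
move=> p0 e0 hI; rewrite /Lp_norm.
have := gt0_ler_poweR (r := p^-1) _ _ _ hI.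
rewrite poweR_EFin -powRrM mulfV ?gt_eqF // powRr1 //; apply.
- by rewrite invr_ge0 ltW.
- rewrite in_itv /= leey andbT.
  by apply: integral_ge0 => z _; rewrite lee_fin powR_ge0.
- by rewrite in_itv /= lee_fin powR_ge0 leey.
Qed.

Lemma Linf_norm_ge0 (F : T -> T -> R) : 0 <= Linf_norm pi F.
Proof.
apply: ess_sup_gee; last by apply: aeW => z; rewrite lee_fin.
by rewrite [X in 0 < X](probability_setT (pi \x pi)) lte01.
Qed.

Lemma abs_le_Linf_norm (F : T -> T -> R) (A B : set T) v :
  measurable A -> measurable B -> 0 < pi A -> 0 < pi B ->
  (forall x y, A x -> B y -> F x y = v) -> `|v|%:E <= Linf_norm pi F.
Proof.
move=> mA mB pA pB FAB; rewrite leNgt; apply/negP => Fv.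
have [N [mN N0 sN]] := ess_sup_ge (pi \x pi) (fun z => `|F z.1 z.2|%:E).
have : (pi \x pi) (A `*` B) <= (pi \x pi) N.
  apply: le_measure; rewrite ?inE //; first exact: measurableX.
  move=> [x y] [/= Ax By]; apply: sN => /=.
  by rewrite FAB //; apply/negP; rewrite -ltNge.
by rewrite N0 product_measure1E // leNgt mule_gt0.
Qed.

Lemma product_measure_cross_le (S : set T) : measurable S ->
  (pi \x pi) ((S `*` setT) `|` (setT `*` S)) <= pi S + pi S.
Proof.
move=> mS; apply: le_trans (measureU2 _ _ _) _; try exact: measurableX.
(* The [change]s remove the content coercions introduced by [measureU2]. *)
change ((pi \x pi) (S `*` setT) + (pi \x pi) (setT `*` S) <= pi S + pi S).
rewrite !product_measure1E //.
change (pi S * pi setT + pi setT * pi S <= pi S + pi S).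
by rewrite probability_setT mule1 mul1e.
Qed.

End GraphonNorms.

Section Coupling.
Context {R : realType} {d : measure_display} {T : measurableType d}.
Variable pi : probability T R.
Local Open Scope ereal_scope.

Lemma delta_p_block_le_Lp_norm p (W : T -> T -> R) k (c : T -> bidx k)
    (B : bidx k -> bidx k -> R) :
  measurable_fun setT (fun z : T * T => W z.1 z.2) -> measurable_fun setT c ->
  delta_p_block pi p W (fun i => fine (pi (c @^-1` [set i]))) B <=
  Lp_norm pi p (fun x y => W x y - B (c x) (c y))%R.
Proof.
(* The law of [x |-> (x, c x)] couples [pi] with the class masses of [c], and
   under it the block model at [(x, c x), (y, c y)] is [B (c x) (c y)]. *)
move=> mW mc.
have mgraph : measurable_fun setT (fun x => (x, c x)).
  exact: measurable_fun_pair.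
pose X : {mfun T >-> (T * bidx k)%type} :=
  HB.pack (fun x => (x, c x)) (isMeasurableFun.Build _ _ _ _ _ mgraph).
pose nu := distribution pi X.
have nu_coupling : is_coupling pi (fun i => fine (pi (c @^-1` [set i]))) nu.
  split => [A mA|i]; rewrite /nu /distribution /pushforward.
    by congr (pi _); apply/seteqP; split => [x [] //|x Ax]; split.
  rewrite fineK; last first.
    by apply: fin_num_measure; rewrite -[X in measurable X]setTI; exact: mc.
  by congr (pi _); apply/seteqP; split => [x [] //|x Ax]; split.
pose f u := (`|W u.1.1 u.2.1 - B u.1.2 u.2.2| `^ p)%:E.
have f0 u : 0 <= f u by rewrite lee_fin powR_ge0.
have mf : measurable_fun [set: (T * bidx k) * (T * bidx k)] f.
  apply/measurable_EFinP; apply: measurableT_comp (measurable_powR p) _.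
  apply: measurableT_comp => //; apply: measurable_funB.
    exact: (measurableT_comp mW (measurable_fun_pair
      (measurableT_comp measurable_fst measurable_fst)
      (measurableT_comp measurable_fst measurable_snd))).
  apply: measurable_fun_block.
    exact: measurableT_comp measurable_snd measurable_fst.
  exact: measurableT_comp measurable_snd measurable_snd.
pose g z := f ((z.1, c z.1), (z.2, c z.2)).
have mg : measurable_fun setT g.
  apply: measurableT_comp mf _; apply: measurable_fun_pair.
    exact: measurableT_comp mgraph measurable_fst.
  exact: measurableT_comp mgraph measurable_snd.
have g0 z : 0 <= g z by exact: f0.
have -> : Lp_norm pi p (fun x y => W x y - B (c x) (c y))%R =
    (\int[nu \x nu]_z f z) `^ p^-1.
  rewrite /Lp_norm; congr (_ `^ _).
  rewrite (fubini_tonelli1 _ mf f0) (fubini_tonelli1 _ mg g0) /fubini_F.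
  rewrite ge0_integral_distribution //; last 2 first.
  - exact: (measurable_fun_fubini_tonelli_F (m2 := nu) _ mf f0).
  - by move=> u; apply: integral_ge0 => v _; exact: f0.
  apply: eq_integral => x _ /=; rewrite ge0_integral_distribution //.
  by apply: measurableT_comp mf _; exact: measurable_fun_pair.
by apply: ereal_inf_lbound; exists nu.
Qed.

Lemma eps_ge_le_Lp_norm p kappa (W : T -> T -> R) k (c : T -> bidx k)
    (B : bidx k -> bidx k -> R) :
  measurable_fun setT (fun z : T * T => W z.1 z.2) -> measurable_fun setT c ->
  (forall a b, B a b = B b a) -> (forall a b, (0 <= B a b)%R) ->
  (forall a, (kappa <= fine (pi (c @^-1` [set a])))%R) ->
  eps_ge pi p kappa W <= Lp_norm pi p (fun x y => W x y - B (c x) (c y))%R.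
Proof.
move=> mW mc Bsym B0 c_kappa.
apply: le_trans _ (delta_p_block_le_Lp_norm p B mW mc).
apply: ereal_inf_lbound; exists k, (fun i => fine (pi (c @^-1` [set i]))), B.
split => //; split => // i.
by apply: fine_ge0; exact: measure_ge0.
Qed.

End Coupling.

Section Partition.
Context {d : measure_display} {T : measurableType d}.
Variables (N : nat) (Y : 'I_N -> set T) (i0 : 'I_N).
Hypotheses (tY : trivIset setT Y) (cY : \bigcup_i Y i = setT).

Definition part_index (x : T) : 'I_N := xget i0 [set i | Y i x].

Lemma part_indexP x : Y (part_index x) x.
Proof.
have [i _ Yix] : (\bigcup_i Y i) x by rewrite cY.
exact: (xgetPex i0 (ex_intro (fun i => Y i x) i Yix)).
Qed.

Lemma part_indexE x i : Y i x -> part_index x = i.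
Proof.
by move=> Yix; apply: tY => //; exists x; split => //; exact: part_indexP.
Qed.

Lemma sum_indic_part_index {R : realType} (F : 'I_N -> R) x :
  \sum_(i < N) F i * \1_(Y i) x = F (part_index x).
Proof.
rewrite (bigD1 (part_index x)) //= big1 ?addr0.
  by rewrite indicE mem_set ?mulr1 //; exact: part_indexP.
move=> i /negPf neq_i; rewrite indicE memNset ?mulr0 //.
by move=> /part_indexE eq_i; rewrite eq_i eqxx in neq_i.
Qed.

Lemma measurable_fun_part_index k (f : 'I_N -> bidx k) :
  (forall i, measurable (Y i)) -> measurable_fun setT (f \o part_index).
Proof.
move=> mY; apply: measurable_fun_bidx => a.
have -> : (f \o part_index) @^-1` [set a] = \bigcup_(i in f @^-1` [set a]) Y i.
  apply/seteqP; split => [x /= fx|x [i /= fi Yix]].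
    by exists (part_index x) => //; exact: part_indexP.
  by rewrite (part_indexE Yix).
by apply: fin_bigcup_measurable => //; exact: finite_finset.
Qed.

End Partition.

Section MergeClasses.
Variables (N : nat) (large : pred 'I_N) (i1 : 'I_N).
Hypothesis large_i1 : large i1.

Let s := [seq i <- enum 'I_N | large i].

Definition merge_rank (i : 'I_N) : bidx (size s).-1 :=
  inord (index (if large i then i else i1) s).

Definition merge_rep (a : bidx (size s).-1) : 'I_N := nth i1 s a.

Let mem_s i : (i \in s) = large i.
Proof. by rewrite mem_filter mem_enum andbT. Qed.

Let size_s : (size s).-1.+1 = size s.
Proof.
by rewrite prednK // -has_predT; apply/hasP; exists i1; rewrite ?mem_s.
Qed.

Let rank_lt (a : bidx (size s).-1) : (a < size s)%N.
Proof. by rewrite -[ltnRHS]size_s ltn_ord. Qed.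

Lemma merge_rep_large a : large (merge_rep a).
Proof. by rewrite -mem_s mem_nth. Qed.

Lemma merge_repK i : large i -> merge_rep (merge_rank i) = i.
Proof.
move=> Li; rewrite /merge_rep /merge_rank Li inordK ?nth_index ?mem_s //.
by rewrite size_s index_mem mem_s.
Qed.

Lemma merge_rankK a : merge_rank (merge_rep a) = a.
Proof.
have s_uniq : uniq s by exact: filter_uniq (enum_uniq 'I_N).
by rewrite /merge_rank merge_rep_large index_uniq ?rank_lt ?inord_val.
Qed.

End MergeClasses.

Section BlockApproximation.
Context {R : realType} {d : measure_display} {T : measurableType d}.
Variables (pi : probability T R) (p : R) (W W' : T -> T -> R) (N : nat)
  (Y : 'I_N -> set T) (beta : 'I_N -> 'I_N -> R) (eps kappa : R) (i0 : 'I_N).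
Hypotheses (p1 : 1 <= p)
  (mW : measurable_fun setT (fun z : T * T => W z.1 z.2))
  (W'_graphon : is_graphon pi W') (mY : forall i, measurable (Y i))
  (tY : trivIset setT Y) (cY : \bigcup_i Y i = setT)
  (W'E : forall x y, W' x y = \sum_(i < N) \sum_(j < N)
                                beta i j * \1_(Y i) x * \1_(Y j) y)
  (W_W'_eps : (Lp_norm pi p (fun x y => (W x y - W' x y)%R) <= eps%:E)%E)
  (kappa_le1 : kappa <= 1)
  (kappa_eps : ((kappa * (2 * N%:R))%:E * (Linf_norm pi W' `^ p)
                  <= (eps `^ p)%:E)%E).

Let cls := part_index Y i0.
Let cls_eq x i : Y i x -> cls x = i := part_indexE i0 tY cY (x := x) (i := i).

(* Positivity is required even when [kappa <= 0]: on a null class [beta] is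
   not controlled by [W']. *)
Definition large_class (i : 'I_N) : bool :=
  (0 < pi (Y i))%E && (kappa%:E <= pi (Y i))%E.

Lemma W'_blockE x y : W' x y = beta (cls x) (cls y).
Proof.
rewrite W'E; under eq_bigr => i _ do
  rewrite (sum_indic_part_index i0 tY cY (fun j => beta i j * \1_(Y i) x)).
exact: (sum_indic_part_index i0 tY cY (fun i => beta i (cls y))).
Qed.

Let M := fine (Linf_norm pi W').

Lemma Linf_norm_W'E : Linf_norm pi W' = M%:E.
Proof.
have W'_bound : (Linf_norm pi W' <= (\sum_i \sum_j `|beta i j|)%:E)%E.
  apply/ess_supP; apply: aeW => z /=; rewrite lee_fin W'_blockE.
  rewrite (bigD1 (cls z.1)) //= (bigD1 (cls z.2)) //= -addrA lerDl.
  by rewrite addr_ge0 ?sumr_ge0 // => i _; rewrite sumr_ge0.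
by rewrite fineK // ge0_fin_numE ?Linf_norm_ge0 // (le_lt_trans W'_bound) ?ltey.
Qed.

Let M_ge0 : 0 <= M.
Proof. by apply: fine_ge0; exact: Linf_norm_ge0. Qed.

Lemma large_class_nonempty i : large_class i -> exists x, Y i x.
Proof.
case/andP => Yi_gt0 _; apply/set0P; apply: contraTneq Yi_gt0 => ->.
by rewrite measure0 ltxx.
Qed.

Lemma large_block_value a b : large_class a -> large_class b ->
  [/\ beta a b = beta b a, 0 <= beta a b & beta a b <= M].
Proof.
move=> La Lb; have [_ W'_sym W'_ge0 _] := W'_graphon.
have [x Yax] := large_class_nonempty La.
have [y Yby] := large_class_nonempty Lb.
have beta_ab : beta a b = W' x y.
  by rewrite W'_blockE (cls_eq Yax) (cls_eq Yby).
split.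
- by rewrite beta_ab W'_sym W'_blockE (cls_eq Yax) (cls_eq Yby).
- by rewrite beta_ab W'_ge0.
apply: le_trans (ler_norm _) _; rewrite -lee_fin -Linf_norm_W'E.
apply: (abs_le_Linf_norm (A := Y a) (B := Y b)) => //.
- by case/andP: La.
- by case/andP: Lb.
by move=> x' y' Yax' Yby'; rewrite W'_blockE (cls_eq Yax') (cls_eq Yby').
Qed.

Let S := \big[setU/set0]_(i < N | ~~ large_class i) Y i.

Lemma small_classes_measure : (pi S <= (N%:R * Num.max kappa 0)%:E)%E.
Proof.
rewrite measure_bigsetU_ord_cond //; last exact: sub_trivIset tY.
apply: (@le_trans _ _ (\sum_(i < N) (Num.max kappa 0)%:E)%E).
  rewrite [leLHS]big_mkcond /=; apply: lee_sum => i _.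
  case: ifPn => [|_]; last by rewrite lee_fin le_max lexx orbT.
  rewrite negb_and -leNgt -ltNge EFin_max le_max.
  by case/orP => [->|/ltW ->]; rewrite ?orbT.
by rewrite sumEFin sumr_const card_ord mulr_natl.
Qed.

Lemma Lp_norm_coarsening_le k (c : T -> bidx k) (B : bidx k -> bidx k -> R) :
  measurable_fun setT c -> (forall a b, 0 <= B a b <= M) ->
  (forall x y, large_class (cls x) -> large_class (cls y) ->
     B (c x) (c y) = W' x y) ->
  (Lp_norm pi p (fun x y => (W' x y - B (c x) (c y))%R) <= eps%:E)%E.
Proof.
move=> mc B_bound B_W'; have [mW' _ W'_ge0 _] := W'_graphon.
have p0 : 0 < p by apply: lt_le_trans p1.
have eps0 : 0 <= eps by rewrite -lee_fin (le_trans _ W_W'_eps) // poweR_ge0.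
have mS : measurable S by apply: bigsetU_measurable => i _; exact: mY.
have small_S x : ~~ large_class (cls x) -> S x.
  by move=> Lx; rewrite /S (bigD1 (cls x)) //=; left; exact: part_indexP.
apply: Lp_norm_le => //.
apply: le_trans (integral_powR_le_support
  (E := (S `*` setT) `|` (setT `*` S)) p0 M_ge0 _ _ _ _) _.
- apply: measurable_funB => //; apply: measurable_fun_block.
    exact: measurableT_comp mc measurable_fst.
  exact: measurableT_comp mc measurable_snd.
- by apply: measurableU; apply: measurableX.
- apply: filterS (ess_sup_ge (pi \x pi)%E (fun z => `|W' z.1 z.2|%:E)) => z.
  rewrite -/(Linf_norm pi W') Linf_norm_W'E lee_fin ger0_norm // => W'_le.
  have /andP[B_ge0 B_le] := B_bound (c z.1) (c z.2).
  have := W'_ge0 z.1 z.2; rewrite ler_norml => ?; apply/andP; split; lra.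
- move=> [x y] /= not_cross; rewrite B_W' ?subrr //; apply/negPn/negP => small.
    by apply: not_cross; left; split => //; exact: small_S.
  by apply: not_cross; right; split => //; exact: small_S.
apply: le_trans (lee_wpmul2l _ (product_measure_cross_le pi mS)) _.
  by rewrite lee_fin powR_ge0.
apply: le_trans (lee_wpmul2l _ (leeD small_classes_measure
                                     small_classes_measure)) _.
  by rewrite lee_fin powR_ge0.
rewrite -EFinD -EFinM lee_fin.
have [_|_] := leP kappa 0; first by rewrite !mulr0 addr0 mulr0 powR_ge0.
rewrite [leLHS](_ : _ = kappa * (2 * N%:R) * M `^ p); last by ring.
by move: kappa_eps; rewrite Linf_norm_W'E poweR_EFin -EFinM lee_fin.
Qed.

Lemma eps_ge_le_coarsening k (c : T -> bidx k) (B : bidx k -> bidx k -> R) :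
  measurable_fun setT c -> (forall a b, B a b = B b a) ->
  (forall a b, 0 <= B a b <= M) ->
  (forall a, kappa <= fine (pi (c @^-1` [set a]))) ->
  (forall x y, large_class (cls x) -> large_class (cls y) ->
     B (c x) (c y) = W' x y) ->
  (eps_ge pi p kappa W <= (2 * eps)%:E)%E.
Proof.
move=> mc B_sym B_bound c_kappa B_W'; have [mW' _ _ _] := W'_graphon.
have mBc : measurable_fun setT (fun z : T * T => B (c z.1) (c z.2)).
  by apply: measurable_fun_block; apply: measurableT_comp.
have B_ge0 a b : 0 <= B a b by case/andP: (B_bound a b).
apply: le_trans (eps_ge_le_Lp_norm p mW mc B_sym B_ge0 c_kappa) _.
have -> : (fun x y => W x y - B (c x) (c y)) =
    (fun x y => (W x y - W' x y) + (W' x y - B (c x) (c y))).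
  by apply/funext => x; apply/funext => y; rewrite addrA subrK.
apply: le_trans (Lp_norm_triangle pi p1 (measurable_funB mW mW')
                   (measurable_funB mW' mBc)) _.
by rewrite mulr_natl mulr2n EFinD leeD // Lp_norm_coarsening_le.
Qed.

Lemma eps_ge_le_merge i1 : large_class i1 ->
  (eps_ge pi p kappa W <= (2 * eps)%:E)%E.
Proof.
move=> L_i1; pose c := merge_rank large_class i1 \o cls.
pose rep := @merge_rep _ large_class i1.
have L_rep a : large_class (rep a) := merge_rep_large L_i1 a.
apply: (@eps_ge_le_coarsening _ c (fun a b => beta (rep a) (rep b))).
- exact: measurable_fun_part_index.
- by move=> a b; case: (large_block_value (L_rep a) (L_rep b)).
- by move=> a b; case: (large_block_value (L_rep a) (L_rep b)) => _ -> ->.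
- move=> a; have mca : measurable (c @^-1` [set a]).
    by rewrite -[X in measurable X]setTI; exact: measurable_fun_part_index.
  rewrite -lee_fin fineK ?fin_num_measure //.
  apply: (@le_trans _ _ (pi (Y (rep a)))); first by case/andP: (L_rep a).
  apply: le_measure; rewrite ?inE // => x /cls_eq Yx.
  by rewrite /c /= Yx merge_rankK.
- by move=> x y Lx Ly; rewrite /rep /c /= !merge_repK // W'_blockE.
Qed.

Lemma eps_ge_le_one_class : (forall i, ~~ large_class i) ->
  (eps_ge pi p kappa W <= (2 * eps)%:E)%E.
Proof.
move=> no_large.
apply: (@eps_ge_le_coarsening 0 (cst ord0) (fun _ _ => 0)).
- exact: measurable_cst.
- by [].
- by move=> a b; rewrite lexx M_ge0.
- by move=> a; rewrite preimage_cst [a]ord1 mem_set // probability_setT.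
- by move=> x y; rewrite (negbTE (no_large _)).
Qed.

End BlockApproximation.

Theorem lemma6p2 (R : realType) (d : measure_display) (T : measurableType d)
    (pi : probability T R) (p : R) (W W' : T -> T -> R) (N : nat)
    (Y : 'I_N -> set T) (beta : 'I_N -> 'I_N -> R) (eps kappa : R) :
  1 <= p ->
  is_graphon pi W ->
  (Linf_norm pi W < +oo)%E ->
  is_graphon pi W' ->
  (forall i, measurable (Y i)) ->
  trivIset setT Y ->
  \bigcup_i Y i = setT ->
  (forall x y, W' x y = \sum_(i < N) \sum_(j < N)
                          beta i j * \1_(Y i) x * \1_(Y j) y) ->
  (Lp_norm pi p (fun x y => (W x y - W' x y)%R) <= eps%:E)%E ->
  kappa <= 1 ->
  ((kappa * (2 * N%:R))%:E * (Linf_norm pi W' `^ p) <= (eps `^ p)%:E)%E ->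
  (eps_ge pi p kappa W <= (2 * eps)%:E)%E.
Proof.
move=> p1 [mW _ _ _] _ W'_graphon mY tY cY W'E W_W'_eps kappa_le1 kappa_eps.
have [i0 _ _] : (\bigcup_i Y i) point by rewrite cY.
have [[i1 L_i1]|no_large] := pselect (exists i, large_class pi Y kappa i).
  exact: (eps_ge_le_merge i0 p1 mW W'_graphon mY tY cY W'E W_W'_eps
            kappa_eps L_i1).
apply: (eps_ge_le_one_class i0 p1 mW W'_graphon mY tY cY W'E W_W'_eps
          kappa_le1 kappa_eps) => i.
by apply/negP => L_i; apply: no_large; exists i.
Qed.
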